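(* Let $G$ be a graph with a pendant vertex $v$ (a vertex of degree one). Then $p(G)=p(G-v)$.
   Context: All graphs are finite and simple. For an acyclic digraph $D$, the phylogeny graph $P(D)$ is the graph on $V(D)$ in which distinct vertices $u,v$ are adjacent if and only if $(u,v)\in A(D)$, or $(v,u)\in A(D)$, or there is a vertex $w$ with $(u,w),(v,w)\in A(D)$. A phylogeny digraph for a graph $G$ is an acyclic digraph $D$ such that $G$ is an induced subgraph of $P(D)$ and $D$ has no arc from a vertex of $V(D)\setminus V(G)$ to a vertex of $V(G)$. The phylogeny number $p(G)$ is the minimum of $|V(D)\setminus V(G)|$ over all phylogeny digraphs $D$ for $G$. *)

From mathcomp Require Import all_boot.
From Stdlib Require Import ClassicalEpsilon.
Set Implicit Arguments. Unset Strict Implicit. Unset Printing Implicit Defensive.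

(* A finite simple graph is a symmetric irreflexive relation e : rel T on a
   finType T (the vertex set V(G) = T).

   A candidate phylogeny digraph for G with k extra vertices has vertex set
   T + 'I_k (the extra vertices V(D) \ V(G) are the inr's) and arc relation
   given by a finite function A : {ffun V*V -> bool}, arc (u,w) iff A (u,w). *)

Definition pvert (T : finType) (k : nat) : finType := (T + 'I_k)%type.

Section Phylo.
Variables (T : finType) (k : nat).
Local Notation V := (pvert T k).

Definition arc (A : {ffun V * V -> bool}) : rel V := fun u w => A (u, w).

Definition acyclicb (A : {ffun V * V -> bool}) : bool :=
  [forall u : V, forall w : V, arc A u w ==> ~~ connect (arc A) w u].

Definition padj (A : {ffun V * V -> bool}) (u w : V) : bool :=
  [|| arc A u w, arc A w u | [exists x : V, arc A u x && arc A w x]].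

Definition phylo_digraph (e : rel T) (A : {ffun V * V -> bool}) : bool :=
  [&& acyclicb A,
      [forall x : T, forall y : T, (x != y) ==> (e x y == padj A (inl x) (inl y))]
    &
      [forall i : 'I_k, forall x : T, ~~ arc A (inr i) (inl x)]].
End Phylo.

Definition has_phylo (T : finType) (e : rel T) (k : nat) : bool :=
  [exists A : {ffun pvert T k * pvert T k -> bool}, phylo_digraph e A].

(* phylogeny number p(G): the least k such that has_phylo e k.
   (Such k always exists for a simple graph; the default 0 is never used
   for simple graphs.) *)
Definition phylo_number (T : finType) (e : rel T) : nat :=
  match excluded_middle_informative (exists k, has_phylo e k) with
  | left H => ex_minn H
  | right _ => 0
  end.

Definition del_vertex (T : finType) (e : rel T) (v : T) : rel {x : T | x != v} :=
  fun x y => e (val x) (val y).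
Arguments del_vertex {T} e v.

From Pilot Require Import Defs.
From mathcomp Require Import all_boot.
From Stdlib Require Import ClassicalEpsilon.
Set Implicit Arguments. Unset Strict Implicit. Unset Printing Implicit Defensive.

(* We show that for every k, G has a phylogeny digraph with
   k extra vertices iff G - v has one; as p(G) is the least such k, this gives
   p(G) = p(G - v).
   - Acyclicity is handled through rank functions: a digraph is acyclic iff
     some map to nat strictly increases along arcs.
   - Restriction: a phylogeny digraph D for G, restricted along the embedding
     of V(G - v) + extras into V(G) + extras, is one for G - v.  Adjacency in
     P(D) survives because the only lost common prey is v, and two distinct
     vertices both preying on v would both be neighbours of v.
   - Extension: a phylogeny digraph D' for G - v plus the single arc u -> v is
     one for G; its restriction is D' again, so adjacency among the old
     vertices is unchanged, while v is adjacent exactly to u. *)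

Local Notation arc := Defs.arc.

Lemma rank_connect (V : finType) (R : rel V) (r : V -> nat) :
  (forall a b, R a b -> r a < r b) -> forall a b, connect R a b -> r a <= r b.
Proof.
move=> r_incr a b /connectP [p]; elim: p a => [|c p IHp] a /=; first by move=> _ ->.
move=> /andP[Rac Rp] b_last.
exact: leq_trans (ltnW (r_incr _ _ Rac)) (IHp _ Rp b_last).
Qed.

Lemma acyclic_of_rank (T : finType) (k : nat) (A : {ffun pvert T k * pvert T k -> bool})
    (r : pvert T k -> nat) :
  (forall a b, arc A a b -> r a < r b) -> acyclicb A.
Proof.
move=> r_incr; apply/forallP => a; apply/forallP => b; apply/implyP => Aab.
by apply/negP => /(rank_connect r_incr); rewrite leqNgt r_incr.
Qed.

(* Conversely, an acyclic digraph is ranked by the number of vertices from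
   which a vertex is reachable. *)
Lemma rank_of_acyclic (T : finType) (k : nat) (A : {ffun pvert T k * pvert T k -> bool}) :
  acyclicb A -> exists r : pvert T k -> nat, forall a b, arc A a b -> r a < r b.
Proof.
move=> acycA; exists (fun a => #|[pred c | connect (arc A) c a]|) => a b Aab.
apply: proper_card; apply/properP; split.
  by apply/subsetP => c; rewrite !inE => /connect_trans; apply; apply: connect1.
exists b; first by rewrite !inE connect0.
by rewrite !inE; apply: (implyP (forallP (forallP acycA a) b)).
Qed.

Lemma phylo_number_eq (T1 T2 : finType) (e1 : rel T1) (e2 : rel T2) :
  (forall k, has_phylo e1 k = has_phylo e2 k) -> phylo_number e1 = phylo_number e2.
Proof.
move=> same; rewrite /phylo_number.
case: excluded_middle_informative => ex1; case: excluded_middle_informative => ex2.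
- by apply: eq_ex_minn => k; rewrite same.
- by case: ex2; case: ex1 => k; rewrite same; exists k.
- by case: ex1; case: ex2 => k; rewrite -same; exists k.
- by [].
Qed.

Lemma padjC (T : finType) (k : nat) (A : {ffun pvert T k * pvert T k -> bool}) a b :
  padj A a b = padj A b a.
Proof.
rewrite /padj orbA [arc A a b || _]orbC -orbA; congr [|| _, _ | _].
by apply/existsP/existsP => -[z]; rewrite andbC => ?; exists z.
Qed.

Section VertexDeletion.
Variables (T : finType) (e : rel T) (v : T) (k : nat).
Local Notation S := {x : T | x != v}.

Definition lift_vertex (a : pvert S k) : pvert T k :=
  match a with inl x => inl (val x) | inr i => inr i end.

Definition drop_vertex (a : pvert T k) : option (pvert S k) :=
  match a with inl x => omap inl (insub x) | inr i => Some (inr i) end.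

Lemma lift_vertexK : pcancel lift_vertex drop_vertex.
Proof. by case=> [x|i] //=; rewrite valK. Qed.

Lemma drop_vertex_v : drop_vertex (inl v) = None.
Proof. by rewrite /= insubF ?eqxx. Qed.

Lemma drop_vertex_None a : drop_vertex a = None -> a = inl v.
Proof. by case: a => [x|i] //=; case: insubP => [//|/negbNE/eqP ->]. Qed.

Lemma drop_vertex_Some a b : drop_vertex a = Some b -> lift_vertex b = a.
Proof. by case: a => [x|i] /=; [case: insubP => // s _ <- [<-] | case=> <-]. Qed.

Definition restrA (A : {ffun pvert T k * pvert T k -> bool}) :
  {ffun pvert S k * pvert S k -> bool} :=
  [ffun p => A (lift_vertex p.1, lift_vertex p.2)].

Lemma arc_restrA A a b : arc (restrA A) a b = arc A (lift_vertex a) (lift_vertex b).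
Proof. by rewrite /Defs.arc ffunE. Qed.

Lemma acyclic_restrA A : acyclicb A -> acyclicb (restrA A).
Proof.
case/rank_of_acyclic => r r_incr.
by apply: (@acyclic_of_rank _ _ _ (r \o lift_vertex)) => a b; rewrite arc_restrA => /r_incr.
Qed.

Lemma padj_restrA A a b :
  ~~ (arc A (lift_vertex a) (inl v) && arc A (lift_vertex b) (inl v)) ->
  padj (restrA A) a b = padj A (lift_vertex a) (lift_vertex b).
Proof.
move=> not_both; rewrite /padj !arc_restrA; congr [|| _, _ | _].
apply/existsP/existsP => [[z]|[z /andP[Aaz Abz]]].
  by rewrite !arc_restrA => ?; exists (lift_vertex z).
case Dz: (drop_vertex z) => [z'|]; last first.
  by move: not_both; rewrite -(drop_vertex_None Dz) Aaz Abz.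
by exists z'; rewrite !arc_restrA (drop_vertex_Some Dz) Aaz.
Qed.

(* If v has at most one neighbour, restricting a phylogeny digraph for G
   yields one for G - v: two distinct vertices preying on v would both be
   neighbours of v. *)
Lemma restrA_phylo A :
  (forall x y, e x v -> e y v -> x = y) ->
  phylo_digraph e A -> phylo_digraph (del_vertex e v) (restrA A).
Proof.
move=> v_nbr_uniq /and3P[acycA adjA no_inA]; apply/and3P; split.
- exact: acyclic_restrA.
- apply/forallP => x; apply/forallP => y; apply/implyP => neq_xy.
  have adj_G (x1 y1 : T) : x1 != y1 -> e x1 y1 = padj A (inl x1) (inl y1).
    by move=> neq; apply/eqP; apply: (implyP (forallP (forallP adjA x1) y1)).
  have prey_v (w : S) : arc A (inl (val w)) (inl v) -> e (val w) v.
    by move=> Awv; rewrite adj_G ?(valP w) // /padj Awv.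
  rewrite /del_vertex adj_G -?(inj_eq val_inj) // padj_restrA //.
  apply/negP => /andP[/prey_v ex /prey_v ey].
  by move: neq_xy; rewrite -(inj_eq val_inj) (v_nbr_uniq _ _ ex ey) eqxx.
- apply/forallP => i; apply/forallP => x; rewrite arc_restrA.
  exact: (forallP (forallP no_inA i) (val x)).
Qed.

End VertexDeletion.

Section PendantExtension.
Variables (T : finType) (e : rel T) (e_sym : symmetric e) (e_irr : irreflexive e).
Variables (v u : T) (v_nbr : forall y, e v y = (y == u)) (k : nat).
Local Notation S := {x : T | x != v}.
Local Notation lift := (@lift_vertex T v k).
Local Notation drop := (@drop_vertex T v k).
Local Notation restr := (@restrA T v k).

Lemma neq_uv : u != v.
Proof. by apply/eqP => eq_uv; move: (v_nbr u); rewrite eqxx {1}eq_uv e_irr. Qed.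

Definition u_del : S := exist _ u neq_uv.

Definition extA (A' : {ffun pvert S k * pvert S k -> bool}) :
  {ffun pvert T k * pvert T k -> bool} :=
  [ffun p => if (drop p.1, drop p.2) is (Some a, Some b) then A' (a, b)
             else (p.1 == inl u) && (p.2 == inl v)].

Lemma arc_extA A' a b :
  arc (extA A') a b = if (drop a, drop b) is (Some a', Some b') then A' (a', b')
                      else (a == inl u) && (b == inl v).
Proof. by rewrite /Defs.arc ffunE. Qed.

Lemma restr_extA A' : restr (extA A') = A'.
Proof. by apply/ffunP => -[a b]; rewrite ffunE /= -/(arc _ _ _) arc_extA !lift_vertexK. Qed.

Lemma arc_extA_lift A' a b : arc (extA A') (lift a) (lift b) = arc A' a b.
Proof. by rewrite -arc_restrA restr_extA. Qed.

Lemma arc_extA_from_v A' b : arc (extA A') (inl v) b = false.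
Proof. by rewrite arc_extA drop_vertex_v; apply/andP => -[/eqP[/eqP]]; rewrite eq_sym (negPf neq_uv). Qed.

Lemma arc_extA_to_v A' a : arc (extA A') a (inl v) = (a == inl u).
Proof. by rewrite arc_extA drop_vertex_v eqxx andbT; case: (drop a). Qed.

(* Extension preserves acyclicity: rank v just above u. *)
Lemma acyclic_extA A' : acyclicb A' -> acyclicb (extA A').
Proof.
case/rank_of_acyclic => r r_incr.
apply: (@acyclic_of_rank _ _ _ (fun a => if drop a is Some a' then r a' else (r (inl u_del)).+1)).
move=> a b; case Da: (drop a) => [a'|]; last by rewrite (drop_vertex_None Da) arc_extA_from_v.
case Db: (drop b) => [b'|]; first by rewrite arc_extA Da Db => /r_incr.
rewrite (drop_vertex_None Db) arc_extA_to_v => /eqP eq_au.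
by move: Da; rewrite eq_au -[inl u]/(lift (inl u_del)) lift_vertexK => -[<-].
Qed.

Lemma padj_extA_v A' y : padj (extA A') (inl v) (inl y) = (y == u).
Proof.
rewrite /padj arc_extA_from_v arc_extA_to_v /=.
have -> : [exists z, arc (extA A') (inl v) z && arc (extA A') (inl y) z] = false.
  by apply/existsP => -[z]; rewrite arc_extA_from_v.
by rewrite orbF; apply/eqP/eqP => [[]|->].
Qed.

Lemma extA_phylo A' : phylo_digraph (del_vertex e v) A' -> phylo_digraph e (extA A').
Proof.
case/and3P => acycA' adjA' no_inA'; apply/and3P; split.
- exact: acyclic_extA.
- apply/forallP => x; apply/forallP => y; apply/implyP => neq_xy.
  have [->|xv] := eqVneq x v; first by rewrite padj_extA_v v_nbr.
  have [->|yv] := eqVneq y v; first by rewrite padjC padj_extA_v e_sym v_nbr.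
  pose x' : S := exist _ x xv; pose y' : S := exist _ y yv.
  have neq_xy' : x' != y' by rewrite -(inj_eq val_inj).
  rewrite -[e x y]/(del_vertex e v x' y') (eqP (implyP (forallP (forallP adjA' x') y') neq_xy')).
  rewrite -[padj A' _ _](congr1 (fun B => padj B (inl x') (inl y')) (restr_extA A')).
  rewrite padj_restrA //=.
  by rewrite !arc_extA_to_v; apply/andP => -[/eqP[ex] /eqP[ey]]; move: neq_xy; rewrite ex ey eqxx.
- apply/forallP => i; apply/forallP => x.
  have [->|xv] := eqVneq x v; first by rewrite arc_extA_to_v.
  rewrite -[inl x]/(lift (inl (exist _ x xv))) -[inr i]/(lift (inr i)) arc_extA_lift.
  exact: (forallP (forallP no_inA' i) (exist _ x xv)).
Qed.

End PendantExtension.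

Theorem mainTheorem6 (T : finType) (e : rel T)
  (e_sym : symmetric e) (e_irr : irreflexive e)
  (v : T) (v_pendant : #|[pred y | e v y]| = 1) :
  phylo_number e = phylo_number (del_vertex e v).
Proof.
have [u nbr_u] := mem_card1 v_pendant.
have v_nbr y : e v y = (y == u) by have := nbr_u y; rewrite !inE.
have v_nbr_uniq x y : e x v -> e y v -> x = y.
  by rewrite ![e _ v]e_sym !v_nbr => /eqP -> /eqP ->.
apply: phylo_number_eq => k; apply/existsP/existsP => -[A phyloA].
- by exists (restrA v A); apply: restrA_phylo.
- by exists (extA u A); apply: extA_phylo.
Qed.
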